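(* For every integer $n\ge 3$, the prism graph $P_2\,\square\,C_n$ (of order $2n$) is not orientable $\mathbb{Z}_{2n}$-distance magic.
   Context: $P_2$ is the path on 2 vertices and $C_n$ the cycle on $n$ vertices. The Cartesian product $G\,\square\,H$ has vertex set $V(G)\times V(H)$, with $(g,h)$ adjacent to $(g',h')$ iff either $g=g'$ and $h$ is adjacent to $h'$ in $H$, or $h=h'$ and $g$ is adjacent to $g'$ in $G$. For an oriented graph $\vec G$ and a vertex $x$, $N^+(x)$ is the set of vertices $y$ with an arc from $x$ to $y$, and $N^-(x)$ is the set of vertices $y$ with an arc from $y$ to $x$. For an Abelian group $\Gamma$ of order $n$, a directed $\Gamma$-distance magic labeling of an oriented graph $\vec G$ of order $n$ is a bijection $\vec l:V\to\Gamma$ such that there is $\mu\in\Gamma$ with $\sum_{y\in N^+(x)}\vec l(y)-\sum_{y\in N^-(x)}\vec l(y)=\mu$ for every vertex $x$. A simple graph $G$ of order $n$ is orientable $\Gamma$-distance magic if some orientation of its edges admits a directed $\Gamma$-distance magic labeling. $\mathbb{Z}_n$ is the cyclic group of integers modulo $n$. *)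

From HB Require Import structures.
From mathcomp Require Import all_boot all_order all_algebra.
Set Implicit Arguments. Unset Strict Implicit. Unset Printing Implicit Defensive.
Import GRing.Theory.

Definition simple_graph (V : finType) (e : rel V) : Prop :=
  irreflexive e /\ symmetric e.

Definition P2_rel : rel 'I_2 := fun i j => i != j.

Definition cycle_rel (n : nat) : rel 'I_n :=
  fun i j => (j == (i.+1 %% n)%N :> nat) || (i == (j.+1 %% n)%N :> nat).

Definition cart_rel (V W : finType) (eG : rel V) (eH : rel W) : rel (V * W) :=
  fun x y => ((x.1 == y.1) && eH x.2 y.2) || ((x.2 == y.2) && eG x.1 y.1).

Definition prism_rel (n : nat) : rel ('I_2 * 'I_n) := cart_rel P2_rel (@cycle_rel n).

Definition is_orientation (V : finType) (e o : rel V) : Prop :=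
  (forall x y, o x y -> e x y) /\
  (forall x y, e x y -> (o x y (+) o y x)).

Definition out_nbhd (V : finType) (o : rel V) (x : V) : {set V} := [set y | o x y].
Definition in_nbhd (V : finType) (o : rel V) (x : V) : {set V} := [set y | o y x].

Local Open Scope ring_scope.
Definition directed_dm_labeling (V : finType) (G : zmodType) (o : rel V)
    (l : V -> G) : Prop :=
  bijective l /\
  exists mu : G, forall x : V,
    \sum_(y in out_nbhd o x) l y - \sum_(y in in_nbhd o x) l y = mu.

Definition orientable_dm (V : finType) (G : finZmodType) (e : rel V) : Prop :=
  #|V| = #|G| /\
  exists o : rel V, is_orientation e o /\
    exists l : V -> G, directed_dm_labeling o l.

Arguments cycle_rel n : clear implicits.
Arguments prism_rel n : clear implicits.

From HB Require Import structures.
From mathcomp Require Import all_boot all_order all_algebra zify.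
Set Implicit Arguments. Unset Strict Implicit. Unset Printing Implicit Defensive.

(* Since 2n is even, reduce a magic labelling modulo 2: out-sums minus
   in-sums become sums over whole neighbourhoods, so every vertex sees an odd
   number of odd labels among its three neighbours iff mu is odd, while exactly
   n of the 2n labels are odd.  Let U k, W k be the parities on the two rim
   cycles.  The rules at (0, k+1) and (1, k+1) force W k = U (k + 3) and
   U k + U (k+2) + U (k+4) = c, hence U has period 6 and each rim carries n/2
   odd labels.  If 3 | n, a period of six would then carry three odd labels,
   but it splits into two triples of equal parity; otherwise U has period
   gcd(n, 6) | 2, so it is constant and there are 0 or 2n odd labels. *)

Lemma periodic_mul (T : Type) (F : nat -> T) p :
  (forall k, F (k + p) = F k) -> forall q k, F (k + p * q) = F k.
Proof.
by move=> Fp; elim=> [|q IHq] k; rewrite ?muln0 ?addn0 // mulnS addnA IHq Fp.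
Qed.

Section PeriodicSums.

Variables (p : nat) (F : nat -> nat).
Hypothesis F_periodic : forall k, F (k + p) = F k.

Lemma sum_periodic_window m : \sum_(m <= k < m + p) F k = \sum_(k < p) F k.
Proof.
rewrite -(big_mkord xpredT); elim: m => [|m IHm] //; apply/(@addnI (F m)).
rewrite addSn -big_ltn ?ltnS ?leq_addr // big_nat_recr ?leq_addr //=.
by rewrite addnC F_periodic IHm.
Qed.

Lemma sum_periodic_shift m : \sum_(k < p) F (k + m) = \sum_(k < p) F k.
Proof.
rewrite -(sum_periodic_window m).
have := big_addn 0 (m + p) m xpredT F; rewrite add0n addKn => ->.
by rewrite big_mkord.
Qed.

Lemma sum_periodic_mul q : \sum_(k < p * q) F k = q * \sum_(k < p) F k.
Proof.
elim: q => [|q IHq]; first by rewrite muln0 big_ord0.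
rewrite -(big_mkord xpredT) mulnS addnC (big_cat_nat _ (leq_addr _ _)) //= big_mkord IHq.
by rewrite sum_periodic_window mulSn addnC.
Qed.

End PeriodicSums.

Section PrismRows.

Variables (n : nat) (U W : nat -> bool) (c : bool).
Hypothesis n_gt0 : 0 < n.
Hypothesis U_periodic : forall k, U (k + n) = U k.
Hypothesis W_periodic : forall k, W (k + n) = W k.
Hypothesis U_rule : forall k, U k.+2 (+) U k (+) W k.+1 = c.
Hypothesis W_rule : forall k, W k.+2 (+) W k (+) U k.+1 = c.

Lemma U_triple k : U k.+4 (+) U k.+2 (+) U k = c.
Proof.
move: (U_rule k) (U_rule k.+2) (W_rule k.+1).
by case: (U k) (U k.+2) (U k.+4) (W k.+1) (W k.+3) c => [] [] [] [] [] [].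
Qed.

Lemma W_shift3 k : W k = U (k + 3).
Proof.
have W_succ j : W j.+1 = U j.+4.
  move: (U_rule j) (U_triple j).
  by case: (U j) (U j.+2) (U j.+4) (W j.+1) c => [] [] [] [] [].
have kn_gt0 : 0 < k + n by rewrite addn_gt0 n_gt0 orbT.
by rewrite -W_periodic -(U_periodic (k + 3)) -(prednK kn_gt0) W_succ; congr U; lia.
Qed.

Lemma U_periodic6 k : U (k + 6) = U k.
Proof.
move: (U_triple k) (U_triple k.+2); rewrite !addnS addn0.
by case: (U k) (U k.+2) (U k.+4) (U k.+2.+4) c => [] [] [] [] [].
Qed.

Lemma sum_W_eq_sum_U : \sum_(k < n) (W k : nat) = \sum_(k < n) (U k : nat).
Proof.
under eq_bigr do rewrite W_shift3.
by apply: (@sum_periodic_shift n (fun k => nat_of_bool (U k))) => k; rewrite U_periodic.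
Qed.

Lemma sum_U_period6_even : ~~ odd (\sum_(k < 6) (U k : nat)).
Proof.
move: (U_triple 0) (U_triple 1); rewrite !big_ord_recr big_ord0 /=.
by case: (U 0) (U 1) (U 2) (U 3) (U 4) (U 5) c => [] [] [] [] [] [] [].
Qed.

Lemma U_const_of_period2 : (forall k, U k.+2 = U k) -> forall k, U k = c.
Proof. by move=> U2 k; rewrite -(U_triple k) !U2; case: (U k). Qed.

Lemma prism_rows_count : \sum_(k < n) (U k + W k) != n.
Proof.
apply/eqP; rewrite big_split /= sum_W_eq_sum_U; set S := \sum_(k < n) _ => sum2U.
have [/dvdnP[d n_eq] | n3] := boolP (3 %| n).
  have [q n6q] : exists q, n = 6 * q by exists (n %/ 6); lia.
  have S_eq : S = q * \sum_(k < 6) (U k : nat).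
    rewrite /S n6q (@sum_periodic_mul 6 (fun k => nat_of_bool (U k))) // => k.
    by rewrite U_periodic6.
  have : \sum_(k < 6) (U k : nat) = 3 by nia.
  by move/(congr1 odd); rewrite (negbTE sum_U_period6_even).
have [m [t mn_eq]] : exists m t, m * n = 2 + 6 * t.
  have [n2 | n4] : n %% 6 = 2 \/ n %% 6 = 4 by lia.
  - by exists 1, (n %/ 6); lia.
  - by exists 2, (n %/ 6 * 2 + 1); lia.
have U2 k : U k.+2 = U k.
  by rewrite -addn2 -(periodic_mul U_periodic6 t) -addnA -mn_eq mulnC periodic_mul.
move: sum2U; rewrite /S; under eq_bigr do rewrite (U_const_of_period2 U2).
by rewrite sum_nat_const card_ord; case: c; lia.
Qed.

End PrismRows.

Section EvenModulusParity.

Variable m : nat.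
Hypothesis m_even : ~~ odd m.

Lemma odd_Zp_add (x y : 'I_m.+2) : odd (x + y)%R = odd x (+) odd y.
Proof. by rewrite /= odd_mod ?oddD //= negbK (negbTE m_even). Qed.

Lemma odd_Zp_opp (x : 'I_m.+2) : odd (- x)%R = odd x.
Proof.
by rewrite /= odd_mod ?oddB ?(ltnW (ltn_ord x)) //= negbK (negbTE m_even).
Qed.

Lemma odd_Zp_sum (I : finType) (P : pred I) (F : I -> 'I_m.+2) :
  odd (\sum_(i | P i) F i)%R = \big[addb/false]_(i | P i) odd (F i).
Proof.
apply: (big_rec2 (fun (a : 'I_m.+2) b => odd a = b)) => // i a b _ <-.
exact: odd_Zp_add.
Qed.

End EvenModulusParity.

Lemma sum_odd_ord k : \sum_(i < k) (odd i : nat) = k./2.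
Proof.
elim: k => [|k IHk]; first by rewrite big_ord0.
by rewrite big_ord_recr /= IHk uphalf_half addnC.
Qed.

Lemma orientation_big_addb (V : finType) (e o : rel V) (g : V -> bool) x :
  symmetric e -> is_orientation e o ->
  \big[addb/false]_(y in out_nbhd o x) g y (+) \big[addb/false]_(y in in_nbhd o x) g y
  = \big[addb/false]_(y | e x y) g y.
Proof.
move=> e_sym [o_sub o_xor].
rewrite big_mkcond [X in _ (+) X]big_mkcond [RHS]big_mkcond -big_split /=.
apply: eq_bigr => y _; rewrite !inE.
have /implyP := o_xor x y; have /implyP := o_sub x y; have /implyP := o_sub y x.
by rewrite (e_sym y x); case: (o x y) (o y x) (e x y) (g y) => [] [] [] [].
Qed.

Lemma big_addb3 (T : finType) (P : pred T) (f : T -> bool) y1 y2 y3 :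
  y1 != y2 -> y1 != y3 -> y2 != y3 ->
  (forall y, P y = [|| y == y1, y == y2 | y == y3]) ->
  \big[addb/false]_(y | P y) f y = f y1 (+) f y2 (+) f y3.
Proof.
move=> n12 n13 n23 P_eq.
rewrite (bigD1 y1) ?P_eq ?eqxx //= (bigD1 y2) /=; last first.
  by rewrite P_eq eqxx orbT eq_sym n12.
rewrite (bigD1 y3) /=; last by rewrite P_eq eqxx !orbT /= !(eq_sym y3) n13 n23.
rewrite big_pred0 ?addbF ?addbA // => y; rewrite P_eq.
by case: (y == y1); case: (y == y2); case: (y == y3); rewrite ?andbF.
Qed.

Section Prism.

Variable n : nat.
Hypothesis n_ge3 : 2 < n.

Let n_gt0 : 0 < n. Proof. exact: ltn_trans n_ge3. Qed.

Definition cyc k : 'I_n := Ordinal (ltn_pmod k n_gt0).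

Lemma cyc_succ k : ordS (cyc k) = cyc k.+1.
Proof. by apply: val_inj; rewrite /= -addn1 modnDml addn1. Qed.

Lemma cyc_pred k : ord_pred (cyc k.+1) = cyc k.
Proof. by rewrite -cyc_succ ordSK. Qed.

Lemma cyc_periodic k : cyc (k + n) = cyc k.
Proof. by apply: val_inj; rewrite /= modnDr. Qed.

Lemma cyc_succ2_neq k : cyc k.+2 != cyc k.
Proof.
apply/eqP => /(congr1 val) /= /eqP.
by rewrite -addn2 -{2}(addn0 k) eqn_modDl mod0n modn_small.
Qed.

Lemma prism_sym : symmetric (prism_rel n).
Proof.
move=> [a i] [b j]; rewrite /prism_rel /cart_rel /P2_rel /cycle_rel /=.
by rewrite (eq_sym a) (eq_sym i) (orbC (val j == _)).
Qed.

Lemma prism_adj (a a' : 'I_2) i y : a != a' ->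
  prism_rel n (a, i) y = [|| y == (a, ordS i), y == (a, ord_pred i) | y == (a', i)].
Proof.
move=> aa'; case: y => b j.
have other_row : (a != b) = (b == a').
  by move: aa'; case: a a' b => [[|[|]]] // ? [[|[|]]] // ? [[|[|]]].
have pred_eq : (val i == (val j).+1 %% n) = (j == ord_pred i).
  rewrite -[LHS]/(i == ordS j).
  by apply/eqP/eqP => [->|->]; rewrite ?ordSK ?ord_predK.
rewrite /prism_rel /cart_rel /P2_rel /cycle_rel /= !xpair_eqE other_row pred_eq.
rewrite -[_ == _ %% n]/(j == ordS i) (eq_sym i j) (eq_sym a b).
by case: (b == a); case: (b == a'); case: (j == ordS i); case: (j == ord_pred i); case: (j == i).
Qed.

Lemma prism_row_rule (f : 'I_2 * 'I_n -> bool) c (a a' : 'I_2) :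
  a != a' -> (forall x, \big[addb/false]_(y | prism_rel n x y) f y = c) ->
  forall k, f (a, cyc k.+2) (+) f (a, cyc k) (+) f (a', cyc k.+1) = c.
Proof.
move=> aa' f_rule k; rewrite -(f_rule (a, cyc k.+1)).
rewrite (big_addb3 _ _ _ _ (fun y => prism_adj _ y aa')) ?cyc_succ ?cyc_pred //.
- by rewrite xpair_eqE eqxx cyc_succ2_neq.
- by rewrite xpair_eqE negb_and aa'.
- by rewrite xpair_eqE negb_and aa'.
Qed.

Lemma sum_prism (f : 'I_2 * 'I_n -> nat) :
  \sum_y f y = \sum_(k < n) (f (ord0, cyc k) + f (ord_max, cyc k)).
Proof.
rewrite (eq_bigr (fun p => f (p.1, p.2))); last by case.
rewrite -(pair_bigA _ (fun a j => f (a, j))) big_ord_recl big_ord1 -big_split /=.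
apply: eq_bigr => k _; have -> : cyc k = k by apply: val_inj; rewrite /= modn_small.
by congr (_ + f (_, _)); apply: val_inj.
Qed.

End Prism.

Theorem theorem7 (n : nat) (hn : (3 <= n)%N) :
  ~ orientable_dm 'Z_(2 * n) (prism_rel n).
Proof.
case=> _ [o [o_orient [l [[l' lK lK'] [mu l_magic]]]]].
have trunc_even : ~~ odd (Zp_trunc (2 * n)) by rewrite /Zp_trunc -subn2 oddB ?oddM //; lia.
pose f y := odd (l y).
have f_rule x : \big[addb/false]_(y | prism_rel n x y) f y = odd mu.
  rewrite -(orientation_big_addb _ _ (@prism_sym n) o_orient) -(l_magic x).
  by rewrite odd_Zp_add // odd_Zp_opp // !odd_Zp_sum.
pose U k := f (ord0, cyc hn k); pose W k := f (ord_max, cyc hn k).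
have U_rule k : U k.+2 (+) U k (+) W k.+1 = odd mu by exact: prism_row_rule.
have W_rule k : W k.+2 (+) W k (+) U k.+1 = odd mu by exact: prism_row_rule.
have n_gt0 : 0 < n := ltnW (ltnW hn).
have U_periodic k : U (k + n) = U k by rewrite /U cyc_periodic.
have W_periodic k : W (k + n) = W k by rewrite /W cyc_periodic.
apply: (negP (prism_rows_count n_gt0 U_periodic W_periodic U_rule W_rule)); apply/eqP.
have count_odd : \sum_(z : 'Z_(2 * n)) (odd z : nat) = n.
  by rewrite sum_odd_ord Zp_cast ?mul2n ?doubleK //; lia.
rewrite /U /W -(sum_prism hn (fun y => nat_of_bool (f y))) -[RHS]count_odd.
by rewrite (reindex l) //; exact: onW_bij (Bijective lK lK').
Qed.
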